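(* Let $(\zeta_t)_{t\ge0}$ be the multi-species ASEP with one open boundary on $[N]$ described in the context, started from an arbitrary configuration in $\{1,2,3,\infty\}^N$. Let $\bar\zeta_t\in\{0,1\}^N$ be defined by $\bar\zeta_t(x)=1$ if $\zeta_t(x)\in\{1,2\}$ and $\bar\zeta_t(x)=0$ if $\zeta_t(x)\in\{3,\infty\}$. Then $(\bar\zeta_t)_{t\ge0}$ has the law of an ASEP with one open boundary on $[N]$ with parameters $q,\alpha,\gamma$.
   Context: Parameters: $q\in(0,1)$, $\alpha>\gamma>0$. The ASEP with one open boundary on $[N]$ is the Markov chain on $\{0,1\}^N$ in which a particle at $x$ jumps to $x+1$ at rate $1$ and to $x-1$ at rate $q$, provided the target is a vacant site in $[N]$. In addition, a particle is created at site $1$ at rate $\alpha$ if site $1$ is vacant, and removed at rate $\gamma$ if site $1$ is occupied. Multi-species ASEP: the state space is $\{1,2,3,\infty\}^N$, with total order $1>_p2>_p3>_p\infty$ (values $1,2,3$ are first, second and third class particles, $\infty$ a hole). Each edge $\{x,x+1\}$, $x\in[N-1]$, carries independent rate-$1$ and rate-$q$ Poisson clocks. When the rate-$1$ clock rings, the two values on the edge are sorted so that the $>_p$-larger value is at $x+1$. When the rate-$q$ clock rings, they are sorted so that the $>_p$-larger value is at $x$. Site $1$ carries a rate-$\alpha$ clock and a rate-$\gamma$ clock. When the rate-$\alpha$ clock rings, a value $\infty$ at site $1$ becomes $1$ and a value $3$ becomes $2$. When the rate-$\gamma$ clock rings, a value $1$ at site $1$ becomes $\infty$ and a value $2$ becomes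 $3$. Other values at site $1$ are unchanged. *)

From HB Require Import structures.
From mathcomp Require Import all_boot all_order all_algebra.
From mathcomp Require Import boolp classical_sets reals topology normedtype sequences.
Set Implicit Arguments. Unset Strict Implicit. Unset Printing Implicit Defensive.
Import Order.TTheory GRing.Theory Num.Theory.
Import numFieldNormedType.Exports.
Local Open Scope classical_set_scope.
Local Open Scope ring_scope.

Section CTMC.
Variables (R : realType) (S : finType).

(* Q-matrix built from jump rates r x y (the diagonal of r is ignored). *)
Definition generator (r : S -> S -> R) (x y : S) : R :=
  if x == y then - \sum_(z | z != x) r x z else r x y.

Definition kid (x y : S) : R := (x == y)%:R.
Definition kmul (A B : S -> S -> R) (x y : S) : R := \sum_(z : S) A x z * B z y.
Definition kpow (Q : S -> S -> R) (k : nat) : S -> S -> R := iter k (kmul Q) kid.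

Definition semigroup (Q : S -> S -> R) (t : R) (x y : S) : R :=
  lim ((fun m : nat => \sum_(k < m) (t ^+ k / (k`!)%:R) * kpow Q k x y) @ \oo).

(* Finite-dimensional distributions of f(X) for the chain X with generator Q:
   pfdd Q f x t0 [:: (t1,e1); ...; (tk,ek)]
     = P_x( f(X_{t1}) = e1, ..., f(X_{tk}) = ek )   when X_{t0} = x and t0 <= t1 <= ... <= tk,
   i.e. the sum over y1..yk with f yi = ei of the products of transition probabilities. *)
Fixpoint pfdd (T : eqType) (Q : S -> S -> R) (f : S -> T) (x : S) (t0 : R)
    (l : seq (R * T)) : R :=
  match l with
  | [::] => 1
  | (t, e) :: l' => \sum_(y : S | f y == e) semigroup Q (t - t0) x y * pfdd Q f y t l'
  end.
End CTMC.

(* ---------- configurations on [N] = {1,...,N}, N = n.+1, site k is index k-1 ---------- *)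
Section Configs.
Variables (n : nat) (T : Type).
Definition swap_sites (c : {ffun 'I_n.+1 -> T}) (i : nat) : {ffun 'I_n.+1 -> T} :=
  [ffun y : 'I_n.+1 => if val y == i then c (inord i.+1)
                      else if val y == i.+1 then c (inord i) else c y].
Definition set_site1 (c : {ffun 'I_n.+1 -> T}) (v : T) : {ffun 'I_n.+1 -> T} :=
  [ffun y : 'I_n.+1 => if val y == 0%N then v else c y].
End Configs.

(* state: {0,1}^N, true = particle *)
Definition asep_state (n : nat) := {ffun 'I_n.+1 -> bool}.

Definition asep_rate (R : realType) (n : nat) (q alpha gamma : R)
    (e e' : asep_state n) : R :=
  \sum_(i < n)
     ( ((e (inord i) && ~~ e (inord i.+1)) && (e' == swap_sites e i))%:R
     + q * ((e (inord i.+1) && ~~ e (inord i)) && (e' == swap_sites e i))%:R )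
  + alpha * (~~ e (inord 0) && (e' == set_site1 e true))%:R
  + gamma * (e (inord 0) && (e' == set_site1 e false))%:R.

Definition asep_gen (R : realType) (n : nat) (q alpha gamma : R) :=
  generator (@asep_rate R n q alpha gamma).

(* species coded by 'I_4: 0 = first class (1), 1 = second class (2),
   2 = third class (3), 3 = hole (infinity).  The order >_p is the reverse
   of the order of the codes: a is >_p-larger than b iff val a < val b. *)
Definition ms_state (n : nat) := {ffun 'I_n.+1 -> 'I_4}.

Definition pgt (a b : 'I_4) : bool := (val a < val b)%N.

(* rate-1 clock on edge {i+1,i+2}: put the >_p-larger value on the right *)
Definition sortR (n : nat) (z : ms_state n) (i : nat) : ms_state n :=
  if pgt (z (inord i)) (z (inord i.+1)) then swap_sites z i else z.
(* rate-q clock: put the >_p-larger value on the left *)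
Definition sortL (n : nat) (z : ms_state n) (i : nat) : ms_state n :=
  if pgt (z (inord i.+1)) (z (inord i)) then swap_sites z i else z.

Definition sp1 : 'I_4 := inord 0.
Definition sp2 : 'I_4 := inord 1.
Definition sp3 : 'I_4 := inord 2.
Definition spInf : 'I_4 := inord 3.

Definition ms_birth (n : nat) (z : ms_state n) : ms_state n :=
  if z (inord 0) == spInf then set_site1 z sp1
  else if z (inord 0) == sp3 then set_site1 z sp2 else z.
Definition ms_death (n : nat) (z : ms_state n) : ms_state n :=
  if z (inord 0) == sp1 then set_site1 z spInf
  else if z (inord 0) == sp2 then set_site1 z sp3 else z.

Definition ms_rate (R : realType) (n : nat) (q alpha gamma : R)
    (z z' : ms_state n) : R :=
  \sum_(i < n) ( (sortR z i == z')%:R + q * (sortL z i == z')%:R )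
  + alpha * (ms_birth z == z')%:R + gamma * (ms_death z == z')%:R.

Definition ms_gen (R : realType) (n : nat) (q alpha gamma : R) :=
  generator (@ms_rate R n q alpha gamma).

Definition proj (n : nat) (z : ms_state n) : asep_state n :=
  [ffun x => (val (z x) < 2)%N].

From HB Require Import structures.
From mathcomp Require Import all_boot all_order all_algebra.
From mathcomp Require Import boolp classical_sets reals topology normedtype sequences.
From mathcomp Require Import zify.
Import Order.TTheory GRing.Theory Num.Theory.
Import numFieldNormedType.Exports.
Set Implicit Arguments. Unset Strict Implicit. Unset Printing Implicit Defensive.
Local Open Scope classical_set_scope.
Local Open Scope ring_scope.

(* The projection is an exact lumping of the multi-species chain.  Each clock
   acts on the projected configuration as an ASEP clock does: sorting an edge
   by >_p moves a particle of {1,2} across a value of {3,oo} exactly as an ASEP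
   jump would, and the boundary clocks flip {1,2} against {3,oo}.  Hence the
   rates out of a configuration, summed over a fibre of the projection, are the
   ASEP rates (Dynkin's criterion); this identity passes to the powers of the
   generator, to its exponential series and finally to all finite-dimensional
   distributions. *)

Section Generator.
Variables (R : realType) (S : finType).
Implicit Types r : S -> S -> R.

Lemma generatorE r x y : generator r x y = r x y - (x == y)%:R * \sum_z r x z.
Proof.
rewrite /generator; case: eqVneq => [<-|_]; last by rewrite mul0r subr0.
by rewrite mul1r [in RHS](bigD1 x) //= opprD addrA subrr add0r.
Qed.

Lemma eq_generator r r' :
  (forall x y, x != y -> r x y = r' x y) -> generator r = generator r'.
Proof.
move=> eq_r; apply/funext => x; apply/funext => y; rewrite /generator.
case: eqVneq => [_|/eq_r //]; congr (- _).
by apply: eq_bigr => z; rewrite eq_sym => /eq_r.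
Qed.

Variable Q : S -> S -> R.

Let Qnorm := \sum_x \sum_y `|Q x y|.

Lemma Qnorm_ge0 : 0 <= Qnorm.
Proof. by do 2![apply: sumr_ge0 => ? _]. Qed.

Lemma norm_kpow_le k x y : `|kpow Q k x y| <= Qnorm ^+ k.
Proof.
elim: k x y => [|k IH] x y /=.
  by rewrite /kid expr0; case: eqP; rewrite ?normr1 ?normr0.
rewrite /kmul exprS; apply: le_trans (ler_norm_sum _ _ _) _.
apply: (@le_trans _ _ (\sum_z `|Q x z| * Qnorm ^+ k)).
  by apply: ler_sum => z _; rewrite normrM ler_wpM2l.
rewrite -mulr_suml ler_wpM2r ?exprn_ge0 ?Qnorm_ge0 //.
rewrite /Qnorm [leRHS](bigD1 x) //= lerDl.
by do 2![apply: sumr_ge0 => ? _].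
Qed.

Lemma cvg_semigroup_series t x y :
  cvgn (fun m : nat => \sum_(k < m) (t ^+ k / (k`!)%:R) * kpow Q k x y).
Proof.
set a := fun k : nat => (t ^+ k / (k`!)%:R) * kpow Q k x y.
have -> : (fun m : nat => \sum_(k < m) a k) = series a.
  by apply/funext => m; rewrite /series /= big_mkord.
apply/normed_cvg/(series_le_cvg _ _ _ (is_cvg_series_exp_coeff (`|t| * Qnorm))).
- by move=> k /=.
- by move=> k; rewrite /exp_coeff divr_ge0 ?exprn_ge0 ?mulr_ge0 ?Qnorm_ge0.
- move=> k; rewrite /a /exp_coeff /= !normrM normfV normrX [`|_%:R|]ger0_norm //.
  by rewrite exprMn mulrAC ler_wpM2r ?invr_ge0 // ler_wpM2l ?exprn_ge0 ?norm_kpow_le.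
Qed.
End Generator.

Lemma lim_sum (R : realType) (I : finType) (P : pred I) (g : I -> nat -> R) :
  (forall i, cvgn (g i)) ->
  lim ((fun m => \sum_(i | P i) g i m) @ \oo) = \sum_(i | P i) lim (g i @ \oo).
Proof.
move=> cvg_g; apply: cvg_lim => //.
by apply: (cvg_big add_continuous) => // i _; exact: cvg_g.
Qed.

Section Lumping.
Variables (R : realType) (S S' : finType) (f : S -> S').
Variables (r : S -> S -> R) (r' : S' -> S' -> R).
Hypothesis lumpable : forall x e, \sum_(y | f y == e) r x y = r' (f x) e.

Lemma sum_fiber_indicator (x : S) e :
  \sum_(y | f y == e) ((x == y)%:R : R) = (f x == e)%:R.
Proof.
rewrite big_mkcond (bigD1 x) //= eqxx big1 ?addr0; first by case: ifP.
by move=> y /negbTE; rewrite eq_sym => ->; case: ifP.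
Qed.

Lemma sum_by_fiber (g : S -> R) : \sum_z g z = \sum_e \sum_(z | f z == e) g z.
Proof. exact: partition_big. Qed.

Lemma lump_generator x e :
  \sum_(y | f y == e) generator r x y = generator r' (f x) e.
Proof.
under eq_bigr do rewrite generatorE.
rewrite sumrB lumpable generatorE -mulr_suml sum_fiber_indicator.
by rewrite (sum_by_fiber (r x)); under eq_bigr do rewrite lumpable.
Qed.

Lemma lump_kpow k x e :
  \sum_(y | f y == e) kpow (generator r) k x y = kpow (generator r') k (f x) e.
Proof.
elim: k x e => [|k IH] x e /=; first exact: sum_fiber_indicator.
rewrite /kmul exchange_big /=.
under eq_bigr do rewrite -mulr_sumr IH.
rewrite (sum_by_fiber (fun z => _ * kpow _ k (f z) e)).
apply: eq_bigr => e' _.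
under eq_bigr => z /eqP -> do [].
by rewrite -mulr_suml lump_generator.
Qed.

Lemma lump_semigroup t x e :
  \sum_(y | f y == e) semigroup (generator r) t x y
  = semigroup (generator r') t (f x) e.
Proof.
rewrite /semigroup -lim_sum => [|y]; last exact: cvg_semigroup_series.
congr (lim (_ @ \oo)); apply/funext => m.
rewrite exchange_big /=; apply: eq_bigr => k _.
by rewrite -mulr_sumr lump_kpow.
Qed.

Lemma lump_pfdd (l : seq (R * S')) x t0 :
  pfdd (generator r) f x t0 l = pfdd (generator r') id (f x) t0 l.
Proof.
elim: l x t0 => [|[t e] l IH] x t0 //=.
under eq_bigr => y /eqP fy_e do rewrite IH fy_e.
by rewrite -mulr_suml lump_semigroup big_pred1_eq.
Qed.
End Lumping.

Section Projection.
Variable n : nat.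
Implicit Types (z : ms_state n) (e : asep_state n).

Definition asep_jumpR e i : asep_state n :=
  if e (inord i) && ~~ e (inord i.+1) then swap_sites e i else e.
Definition asep_jumpL e i : asep_state n :=
  if e (inord i.+1) && ~~ e (inord i) then swap_sites e i else e.
Definition asep_birth e : asep_state n :=
  if ~~ e (inord 0) then set_site1 e true else e.
Definition asep_death e : asep_state n :=
  if e (inord 0) then set_site1 e false else e.

Lemma projE z x : proj z x = (val (z x) < 2)%N.
Proof. by rewrite ffunE. Qed.

Lemma proj_swap_sites z i : proj (swap_sites z i) = swap_sites (proj z) i.
Proof. by apply/ffunP => y; rewrite !ffunE; case: ifP => _ //; case: ifP. Qed.

Lemma proj_set_site1 z v : proj (set_site1 z v) = set_site1 (proj z) (val v < 2)%N.
Proof. by apply/ffunP => y; rewrite !ffunE; case: ifP; rewrite ?ffunE. Qed.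

Lemma swap_sites_if (T : Type) (c : {ffun 'I_n.+1 -> T}) i (b b' : bool) :
  (b != b' -> c (inord i) = c (inord i.+1)) ->
  (if b then swap_sites c i else c) = (if b' then swap_sites c i else c).
Proof.
case: eqVneq => [-> //|_ /(_ isT) c_eq].
suff swap_id : swap_sites c i = c by case: (b); case: (b').
apply/ffunP => y; rewrite ffunE.
case: eqP => [y_i|_]; first by rewrite -c_eq -y_i inord_val.
by case: eqP => [y_i|_] //; rewrite c_eq -y_i inord_val.
Qed.

Lemma proj_sortR z i : proj (sortR z i) = asep_jumpR (proj z) i.
Proof.
rewrite /sortR /asep_jumpR (fun_if (@proj n)) proj_swap_sites.
apply: swap_sites_if; rewrite /pgt !projE.
by case: (z (inord i)) (z (inord i.+1)) => [a ?] [b ?] /=; lia.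
Qed.

Lemma proj_sortL z i : proj (sortL z i) = asep_jumpL (proj z) i.
Proof.
rewrite /sortL /asep_jumpL (fun_if (@proj n)) proj_swap_sites.
apply: swap_sites_if; rewrite /pgt !projE.
by case: (z (inord i)) (z (inord i.+1)) => [a ?] [b ?] /=; lia.
Qed.

Lemma val_sp1 : val sp1 = 0%N. Proof. exact: inordK. Qed.
Lemma val_sp2 : val sp2 = 1%N. Proof. exact: inordK. Qed.
Lemma val_sp3 : val sp3 = 2%N. Proof. exact: inordK. Qed.
Lemma val_spInf : val spInf = 3%N. Proof. exact: inordK. Qed.

Lemma proj_ms_birth z : proj (ms_birth z) = asep_birth (proj z).
Proof.
rewrite /ms_birth /asep_birth projE -!val_eqE val_spInf val_sp3.
by case: (z (inord 0)) => [[|[|[|[|?]]]] ?] //=; rewrite proj_set_site1 ?val_sp1 ?val_sp2.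
Qed.

Lemma proj_ms_death z : proj (ms_death z) = asep_death (proj z).
Proof.
rewrite /ms_death /asep_death projE -!val_eqE val_sp1 val_sp2.
by case: (z (inord 0)) => [[|[|[|[|?]]]] ?] //=; rewrite proj_set_site1 ?val_spInf ?val_sp3.
Qed.
End Projection.

Definition asep_clock_rate (R : realType) (n : nat) (q alpha gamma : R)
    (e e' : asep_state n) : R :=
  \sum_(i < n) ((asep_jumpR e i == e')%:R + q * (asep_jumpL e i == e')%:R)
  + alpha * (asep_birth e == e')%:R + gamma * (asep_death e == e')%:R.

Lemma asep_gen_clock (R : realType) (n : nat) (q alpha gamma : R) :
  asep_gen q alpha gamma = generator (@asep_clock_rate R n q alpha gamma).
Proof.
apply: eq_generator => e e' neq_e; rewrite /asep_rate /asep_clock_rate.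
have clock_hit (b : bool) (u : asep_state n) :
  ((if b then u else e) == e') = b && (e' == u).
  by case: b => /=; rewrite ?(negbTE neq_e) // eq_sym.
rewrite /asep_jumpR /asep_jumpL /asep_birth /asep_death !clock_hit.
by under [in RHS]eq_bigr do rewrite !clock_hit.
Qed.

Lemma ms_rate_lumpable (R : realType) (n : nat) (q alpha gamma : R) z e :
  \sum_(z' | proj z' == e) ms_rate q alpha gamma z z'
  = @asep_clock_rate R n q alpha gamma (proj z) e.
Proof.
rewrite /ms_rate /asep_clock_rate !big_split /= exchange_big /= -big_split /=.
rewrite -!mulr_sumr !sum_fiber_indicator proj_ms_birth proj_ms_death.
by congr (_ + _ + _); apply: eq_bigr => i _;
  rewrite big_split /= -mulr_sumr !sum_fiber_indicator proj_sortR proj_sortL.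
Qed.

Unset Implicit Arguments.

Theorem lemma2p1 (R : realType) (n : nat) (q alpha gamma : R)
    (hq0 : 0 < q) (hq1 : q < 1) (hg : 0 < gamma) (hag : gamma < alpha)
    (zeta0 : ms_state n) (l : seq (R * asep_state n)) :
  sorted (fun s t : R => s <= t) (0 :: map fst l) ->
  pfdd (ms_gen q alpha gamma) (@proj n) zeta0 0 l
  = pfdd (asep_gen q alpha gamma) id (proj zeta0) 0 l.
Proof.
(* The lumping is exact for all rates and all lists of times. *)
move=> _; rewrite asep_gen_clock.
exact/lump_pfdd/ms_rate_lumpable.
Qed.
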